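(* Let $c_1>0>c_2$, $L=c_1-c_2$, $t_0>0$, and set $$q_1(0)=\ln L-c_1t_0-\ln\big(c_1-c_2e^{-Lt_0}\big),\qquad q_2(0)=-\ln L-c_2t_0+\ln\big(c_1e^{-Lt_0}-c_2\big).$$ Define for $\xi\in[q_1(0),q_2(0)]$ $$h_*(\xi)=\frac{4c_1^2c_2^2(1-e^{-Lt_0})^2e^{\xi}}{\Big(Le^{-c_1t_0}+c_2-c_1e^{-Lt_0}+\big(-c_1+c_2e^{-Lt_0}+Le^{c_2t_0}\big)e^{\xi}\Big)^2}.$$ Then (whenever the denominator does not vanish on $[q_1(0),q_2(0)]$) $$\int_{q_1(0)}^{q_2(0)}h_*(\xi)\,d\xi=-4c_1c_2 .$$ Moreover $h_*(\xi)=\lim_{t\uparrow t_0}u_x\big(t,y_m(t,\xi)\big)^2\,\partial_\xi y_m(t,\xi)$ for $\xi\in(q_1(0),q_2(0))$, where $u$ and $y_m$ are as in the context.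
   Context: For $t\neq t_0$ let $p_1(t)=\frac{c_1-c_2e^{L(t-t_0)}}{1-e^{L(t-t_0)}}$, $p_2(t)=\frac{c_2-c_1e^{L(t-t_0)}}{1-e^{L(t-t_0)}}$, $q_1(t)=\ln L+c_1(t-t_0)-\ln(c_1-c_2e^{L(t-t_0)})$, $q_2(t)=-\ln L+c_2(t-t_0)+\ln(c_1e^{L(t-t_0)}-c_2)$, and $u(t,x)=p_1(t)e^{-|x-q_1(t)|}+p_2(t)e^{-|x-q_2(t)|}$ for $t<t_0$. With $C(\xi)=c_2-c_1e^{-Lt_0}+Le^{\xi+c_2t_0}$ and $D(\xi)=L^2e^{-c_1t_0}-Lc_1e^{\xi}+Lc_2e^{\xi-Lt_0}$, let $$y_m(t,\xi)=\ln\!\left(\frac{e^{c_2(t-t_0)}}{L}\cdot\frac{(c_1e^{L(t-t_0)}-c_2)D(\xi)+L^2e^{c_1(t-t_0)}C(\xi)}{D(\xi)+(c_1e^{c_2(t-t_0)}-c_2e^{c_1(t-t_0)})C(\xi)}\right),$$ the characteristic (solution of $\partial_t y=u(t,y)$, $y(0,\xi)=\xi$) starting between the two peaks. *)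

From Stdlib Require Import Reals.
Open Scope R_scope.

Section Defs.
Variables c1 c2 t0 : R.
Let L := c1 - c2.

Definition p1 (t : R) : R :=
  (c1 - c2 * exp (L * (t - t0))) / (1 - exp (L * (t - t0))).
Definition p2 (t : R) : R :=
  (c2 - c1 * exp (L * (t - t0))) / (1 - exp (L * (t - t0))).
Definition q1 (t : R) : R :=
  ln L + c1 * (t - t0) - ln (c1 - c2 * exp (L * (t - t0))).
Definition q2 (t : R) : R :=
  - ln L + c2 * (t - t0) + ln (c1 * exp (L * (t - t0)) - c2).

(* the two-peakon solution u(t,x), t < t0 *)
Definition u (t x : R) : R :=
  p1 t * exp (- Rabs (x - q1 t)) + p2 t * exp (- Rabs (x - q2 t)).

Definition Cf (xi : R) : R :=
  c2 - c1 * exp (- L * t0) + L * exp (xi + c2 * t0).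
Definition Df (xi : R) : R :=
  L ^ 2 * exp (- c1 * t0) - L * c1 * exp xi + L * c2 * exp (xi - L * t0).

Definition ym (t xi : R) : R :=
  ln (exp (c2 * (t - t0)) / L *
      (((c1 * exp (L * (t - t0)) - c2) * Df xi
         + L ^ 2 * exp (c1 * (t - t0)) * Cf xi)
       / (Df xi + (c1 * exp (c2 * (t - t0)) - c2 * exp (c1 * (t - t0))) * Cf xi))).

Definition q10 : R := ln L - c1 * t0 - ln (c1 - c2 * exp (- L * t0)).
Definition q20 : R := - ln L - c2 * t0 + ln (c1 * exp (- L * t0) - c2).

Definition hden (xi : R) : R :=
  L * exp (- c1 * t0) + c2 - c1 * exp (- L * t0)
  + (- c1 + c2 * exp (- L * t0) + L * exp (c2 * t0)) * exp xi.

Definition hstar (xi : R) : R :=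
  4 * c1 ^ 2 * c2 ^ 2 * (1 - exp (- L * t0)) ^ 2 * exp xi / (hden xi) ^ 2.
End Defs.

(* The integrand is h_*(xi) = K e^xi / (A + B e^xi)^2 with A, B < 0, hence has the
   antiderivative -K / (B (A + B e^xi)).  At q1(0) and q2(0) the denominator
   A + B e^xi equals c1 c2 (1 - E)^2 divided by c1 - c2 E, resp. by L e^(c2 t0)
   (E = e^(-L t0)), and the difference of the two values is -4 c1 c2.

   For the limit, xi lies between the peaks exactly when C(xi) < 0 and D(xi) < 0;
   then y_m(t, xi) stays strictly between q1(t) and q2(t), where u is smooth.  Writing
   Y = e^(y_m), w = e^(L (t - t0)), one finds
   u_x(t, y_m) = -L (e^(c1 (t - t0)) / Y + Y / e^(c2 (t - t0))) / (1 - w), while the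
   xi-derivative of y_m = ln (k (a D + b C) / (D + c C)) is proportional to the
   Wronskian D' C - D C' = -c1 c2 L (1 - E)^2 e^xi and to (1 - w)^2.  The factor
   (1 - w)^2 cancels, the product is continuous at t0, and Y(t0) = 1 gives h_*(xi). *)

From Stdlib Require Import Reals Lra.
From Coquelicot Require Import Coquelicot.
Open Scope R_scope.

Lemma is_RInt_exp_div_sqr (A B K a b : R) : 0 < A * B ->
  is_RInt (fun x => K * exp x / (A + B * exp x) ^ 2) a b
    (K / B * (/ (A + B * exp a) - / (A + B * exp b))).
Proof.
  intros hAB.
  assert (hnz : forall x, A + B * exp x <> 0).
  { intros x hx. assert (0 < exp x) by apply exp_pos.
    assert (A * (A + B * exp x) > 0) by nra. nra. }
  assert (hB : B <> 0) by (intros ->; lra).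
  set (F := fun x => - K / (B * (A + B * exp x))).
  replace (K / B * (/ (A + B * exp a) - / (A + B * exp b))) with (minus (F b) (F a)).
  2: { unfold F, minus, plus, opp; simpl. field. split; auto. }
  apply (is_RInt_derive (V := R_CompleteNormedModule)); intros x _.
  - unfold F. auto_derive.
    + apply Rmult_integral_contrapositive; auto.
    + field. auto.
  - apply (ex_derive_continuous (K := R_AbsRing) (V := R_NormedModule)).
    auto_derive. rewrite Rmult_1_r. auto.
Qed.

Lemma exp_balance_lt0 (p n s : R) : 0 < p -> n < 0 -> 0 < s ->
  p * exp (- p * s) * (1 - exp (n * s)) + n * (1 - exp (- p * s)) < 0.
Proof.
  intros hp hn hs.
  assert (hns : 1 + n * s <= exp (n * s)) by apply exp_ineq1_le.
  assert (hps : 1 + p * s < exp (p * s)) by (apply exp_ineq1; nra).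
  assert (hinv : exp (- p * s) * exp (p * s) = 1)
    by (rewrite <- exp_plus, <- exp_0; f_equal; ring).
  assert (hpos : 0 < exp (- p * s)) by apply exp_pos.
  assert (p * exp (- p * s) * (1 - exp (n * s)) <= p * exp (- p * s) * (- n * s))
    by (apply Rmult_le_compat_l; nra).
  assert (exp (- p * s) * (p * s) < 1 - exp (- p * s)) by nra.
  assert (n * (1 - exp (- p * s)) < n * (exp (- p * s) * (p * s)))
    by (apply Rmult_lt_gt_compat_neg_l; lra).
  nra.
Qed.

Lemma is_derive_ln_affine_ratio (f g : R -> R) (df dg k al be ga x : R) :
  is_derive f x df -> is_derive g x dg ->
  g x + ga * f x <> 0 -> 0 < k * ((al * g x + be * f x) / (g x + ga * f x)) ->
  is_derive (fun s => ln (k * ((al * g s + be * f s) / (g s + ga * f s)))) x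
    ((al * ga - be) * (dg * f x - g x * df) / ((al * g x + be * f x) * (g x + ga * f x))).
Proof.
  intros hf hg hden hpos.
  assert (hk : k <> 0) by (intros ->; lra).
  assert (hnum : al * g x + be * f x <> 0)
    by (intros e; rewrite e in hpos; unfold Rdiv in hpos; lra).
  auto_derive.
  - repeat split; auto; eexists; eauto.
  - repeat match goal with |- context [Derive ?F x] =>
      first [rewrite (is_derive_unique F x df hf) | rewrite (is_derive_unique F x dg hg)]
    end.
    field. auto.
Qed.

Lemma exp_neg_diff_mul (a b s : R) : exp (- (a - b) * s) = exp (- a * s) * exp (b * s).
Proof. rewrite <- exp_plus. f_equal. ring. Qed.

Lemma exp_sub_mul (x a s : R) : exp (x - a * s) = exp x * exp (- a * s).
Proof. rewrite <- exp_plus. f_equal. ring. Qed.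

Lemma exp_diff_mul (a b s : R) : exp ((a - b) * s) = exp (a * s) / exp (b * s).
Proof. unfold Rdiv. rewrite <- exp_Ropp, <- exp_plus. f_equal. ring. Qed.

Section TwoPeakons.
Variables c1 c2 t0 : R.
Hypotheses (hc1 : 0 < c1) (hc2 : c2 < 0) (ht0 : 0 < t0).

Local Notation L := (c1 - c2).
Local Notation E := (exp (- (c1 - c2) * t0)).

Lemma hden_coefs_lt0 :
  L * exp (- c1 * t0) + c2 - c1 * E < 0 /\ - c1 + c2 * E + L * exp (c2 * t0) < 0.
Proof.
  rewrite exp_neg_diff_mul. split.
  - generalize (exp_balance_lt0 c1 c2 t0 hc1 hc2 ht0). nra.
  - assert (h := exp_balance_lt0 (- c2) (- c1) t0 ltac:(lra) ltac:(lra) ht0).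
    rewrite Ropp_involutive in h. nra.
Qed.

Lemma hden_lt0 (xi : R) : hden c1 c2 t0 xi < 0.
Proof.
  destruct hden_coefs_lt0 as [hA hB].
  assert (0 < exp xi) by apply exp_pos.
  unfold hden. nra.
Qed.

Lemma exp_q10 : exp (q10 c1 c2 t0) = L * exp (- c1 * t0) / (c1 - c2 * E).
Proof.
  assert (0 < E) by apply exp_pos.
  replace (q10 c1 c2 t0) with (ln L + - c1 * t0 + - ln (c1 - c2 * E))
    by (unfold q10; ring).
  rewrite !exp_plus, exp_Ropp, !exp_ln by nra. reflexivity.
Qed.

Lemma exp_q20 : exp (q20 c1 c2 t0) = (c1 * E - c2) / (L * exp (c2 * t0)).
Proof.
  assert (0 < E) by apply exp_pos.
  replace (q20 c1 c2 t0) with (- ln L + - (c2 * t0) + ln (c1 * E - c2))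
    by (unfold q20; ring).
  rewrite !exp_plus, !exp_Ropp, !exp_ln by nra. field.
  split; [apply Rgt_not_eq, exp_pos | lra].
Qed.

Lemma hden_q10 : hden c1 c2 t0 (q10 c1 c2 t0) = c1 * c2 * (1 - E) ^ 2 / (c1 - c2 * E).
Proof.
  assert (0 < E) by apply exp_pos.
  unfold hden. rewrite exp_q10, !exp_neg_diff_mul in *.
  field. nra.
Qed.

Lemma hden_q20 :
  hden c1 c2 t0 (q20 c1 c2 t0) = c1 * c2 * (1 - E) ^ 2 / (L * exp (c2 * t0)).
Proof.
  assert (0 < exp (c2 * t0)) by apply exp_pos.
  unfold hden. rewrite exp_q20, !exp_neg_diff_mul.
  field. split; lra.
Qed.

Lemma RiemannInt_hstar :
  exists pr : Riemann_integrable (hstar c1 c2 t0) (q10 c1 c2 t0) (q20 c1 c2 t0),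
    RiemannInt pr = - 4 * c1 * c2.
Proof.
  destruct hden_coefs_lt0 as [hA hB].
  assert (hI := is_RInt_exp_div_sqr
    (L * exp (- c1 * t0) + c2 - c1 * E) (- c1 + c2 * E + L * exp (c2 * t0))
    (4 * c1 ^ 2 * c2 ^ 2 * (1 - E) ^ 2) (q10 c1 c2 t0) (q20 c1 c2 t0) ltac:(nra)).
  exists (ex_RInt_Reals_0 _ _ _ (ex_intro _ _ hI)).
  rewrite <- RInt_Reals, (is_RInt_unique (hstar c1 c2 t0) _ _ _ hI).
  fold (hden c1 c2 t0 (q10 c1 c2 t0)) (hden c1 c2 t0 (q20 c1 c2 t0)).
  rewrite hden_q10, hden_q20.
  assert (0 < E) by apply exp_pos.
  assert (0 < exp (c2 * t0)) by apply exp_pos.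
  assert (E < 1) by (rewrite <- exp_0; apply exp_increasing; nra).
  field. repeat split; nra.
Qed.

Lemma Cf_eq (xi : R) :
  Cf c1 c2 t0 xi = c2 - c1 * E + L * exp (c2 * t0) * exp xi.
Proof. unfold Cf. rewrite exp_plus. ring. Qed.

Lemma Df_eq (xi : R) :
  Df c1 c2 t0 xi = L ^ 2 * exp (- c1 * t0) - L * c1 * exp xi + L * c2 * E * exp xi.
Proof. unfold Df. rewrite exp_sub_mul. ring. Qed.

Lemma Cf_lt0 (xi : R) : xi < q20 c1 c2 t0 -> Cf c1 c2 t0 xi < 0.
Proof.
  intros h. apply exp_increasing in h.
  rewrite exp_q20, <- Rlt_div_r in h by (assert (0 < exp (c2 * t0)) by apply exp_pos; nra).
  rewrite Cf_eq. lra.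
Qed.

Lemma Df_lt0 (xi : R) : q10 c1 c2 t0 < xi -> Df c1 c2 t0 xi < 0.
Proof.
  intros h. apply exp_increasing in h.
  assert (0 < E) by apply exp_pos.
  rewrite exp_q10, Rlt_div_l in h by nra.
  rewrite Df_eq. nra.
Qed.

Lemma is_derive_Cf (xi : R) : is_derive (Cf c1 c2 t0) xi (L * exp (c2 * t0) * exp xi).
Proof.
  apply (is_derive_ext (fun s => c2 - c1 * E + L * exp (c2 * t0) * exp s)).
  - intros s. symmetry. apply Cf_eq.
  - auto_derive; [exact I | ring].
Qed.

Lemma is_derive_Df (xi : R) :
  is_derive (Df c1 c2 t0) xi (- L * c1 * exp xi + L * c2 * E * exp xi).
Proof.
  apply (is_derive_ext (fun s => L ^ 2 * exp (- c1 * t0) - L * c1 * exp s + L * c2 * E * exp s)).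
  - intros s. symmetry. apply Df_eq.
  - auto_derive; [exact I | ring].
Qed.

Lemma Cf_Df_wronskian (xi : R) :
  (- L * c1 * exp xi + L * c2 * E * exp xi) * Cf c1 c2 t0 xi
  - Df c1 c2 t0 xi * (L * exp (c2 * t0) * exp xi)
  = - c1 * c2 * L * (1 - E) ^ 2 * exp xi.
Proof. rewrite Cf_eq, Df_eq, exp_neg_diff_mul. ring. Qed.

Lemma Df_add_Cf (xi : R) : Df c1 c2 t0 xi + L * Cf c1 c2 t0 xi = L * hden c1 c2 t0 xi.
Proof.
  rewrite Cf_eq, Df_eq. unfold hden. ring.
Qed.

Lemma exp_q1 (t : R) :
  exp (q1 c1 c2 t0 t) = L * exp (c1 * (t - t0)) / (c1 - c2 * exp (L * (t - t0))).
Proof.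
  assert (0 < exp (L * (t - t0))) by apply exp_pos.
  replace (q1 c1 c2 t0 t)
    with (ln L + c1 * (t - t0) + - ln (c1 - c2 * exp (L * (t - t0))))
    by (unfold q1; ring).
  rewrite !exp_plus, exp_Ropp, !exp_ln by nra. reflexivity.
Qed.

Lemma exp_q2 (t : R) :
  exp (q2 c1 c2 t0 t) = (c1 * exp (L * (t - t0)) - c2) * exp (c2 * (t - t0)) / L.
Proof.
  assert (0 < exp (L * (t - t0))) by apply exp_pos.
  unfold q2. rewrite !exp_plus, exp_Ropp, !exp_ln by nra. field. lra.
Qed.

Section Characteristic.
Variable xi : R.
Hypothesis hxi : q10 c1 c2 t0 < xi < q20 c1 c2 t0.

Local Notation C := (Cf c1 c2 t0 xi).
Local Notation D := (Df c1 c2 t0 xi).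

Definition ym_num (t : R) : R :=
  (c1 * exp (L * (t - t0)) - c2) * D + L ^ 2 * exp (c1 * (t - t0)) * C.
Definition ym_den (t : R) : R :=
  D + (c1 * exp (c2 * (t - t0)) - c2 * exp (c1 * (t - t0))) * C.
Definition exp_ym (t : R) : R := exp (c2 * (t - t0)) / L * (ym_num t / ym_den t).

Lemma ym_eq (t : R) : ym c1 c2 t0 t xi = ln (exp_ym t).
Proof. reflexivity. Qed.

Lemma ym_num_lt0 (t : R) : ym_num t < 0.
Proof.
  assert (hC := Cf_lt0 xi (proj2 hxi)). assert (hD := Df_lt0 xi (proj1 hxi)).
  assert (0 < exp (L * (t - t0))) by apply exp_pos.
  assert (0 < exp (c1 * (t - t0))) by apply exp_pos.
  assert (0 < c1 * exp (L * (t - t0)) - c2) by nra.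
  assert (0 < L ^ 2 * exp (c1 * (t - t0))) by (apply Rmult_lt_0_compat; [apply pow_lt|]; lra).
  unfold ym_num. nra.
Qed.

Lemma ym_den_lt0 (t : R) : ym_den t < 0.
Proof.
  assert (hC := Cf_lt0 xi (proj2 hxi)). assert (hD := Df_lt0 xi (proj1 hxi)).
  assert (0 < exp (c1 * (t - t0))) by apply exp_pos.
  assert (0 < exp (c2 * (t - t0))) by apply exp_pos.
  assert (0 < c1 * exp (c2 * (t - t0)) - c2 * exp (c1 * (t - t0))) by nra.
  unfold ym_den. nra.
Qed.

Lemma exp_ym_pos (t : R) : 0 < exp_ym t.
Proof.
  assert (hN := ym_num_lt0 t). assert (hD := ym_den_lt0 t).
  unfold exp_ym. apply Rmult_lt_0_compat.
  - apply Rdiv_lt_0_compat; [apply exp_pos | lra].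
  - replace (ym_num t / ym_den t) with (- ym_num t / - ym_den t) by (field; lra).
    apply Rdiv_lt_0_compat; lra.
Qed.

Lemma exp_ym_t0 : exp_ym t0 = 1.
Proof.
  assert (hD := ym_den_lt0 t0).
  unfold exp_ym, ym_den, ym_num in *. rewrite Rminus_diag, !Rmult_0_r, exp_0 in *.
  field. split; lra.
Qed.

Lemma exp_q1_lt_exp_ym (t : R) : t < t0 -> exp (q1 c1 c2 t0 t) < exp_ym t.
Proof.
  intros ht.
  assert (hC := Cf_lt0 xi (proj2 hxi)). assert (hD := Df_lt0 xi (proj1 hxi)).
  assert (hden := ym_den_lt0 t).
  assert (hm : exp (c1 * (t - t0)) < exp (c2 * (t - t0))) by (apply exp_increasing; nra).
  assert (0 < exp (c1 * (t - t0))) by apply exp_pos.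
  assert (0 < exp (c2 * (t - t0))) by apply exp_pos.
  assert (0 < exp (L * (t - t0))) by apply exp_pos.
  assert (0 < c1 - c2 * exp (L * (t - t0))) by nra.
  assert (0 < c1 * exp (c2 * (t - t0)) - c2 * exp (c1 * (t - t0))) by nra.
  apply Rlt_0_minus.
  replace (exp_ym t - exp (q1 c1 c2 t0 t)) with
    (- c1 * c2 * (exp (c2 * (t - t0)) - exp (c1 * (t - t0))) ^ 2 * - D /
     (exp (c2 * (t - t0)) * L * - ym_den t * (c1 - c2 * exp (L * (t - t0))))).
  - apply Rdiv_lt_0_compat.
    + apply Rmult_lt_0_compat; [apply Rmult_lt_0_compat; [nra | apply pow_lt] | ]; lra.
    + apply Rmult_lt_0_compat; [apply Rmult_lt_0_compat; [apply Rmult_lt_0_compat|] |]; lra.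
  - unfold exp_ym, ym_den, ym_num in *. rewrite exp_q1, exp_diff_mul in *.
    field. repeat split; lra.
Qed.

Lemma exp_ym_lt_exp_q2 (t : R) : t < t0 -> exp_ym t < exp (q2 c1 c2 t0 t).
Proof.
  intros ht.
  assert (hC := Cf_lt0 xi (proj2 hxi)).
  assert (hden := ym_den_lt0 t).
  assert (hm : exp (c1 * (t - t0)) < exp (c2 * (t - t0))) by (apply exp_increasing; nra).
  assert (0 < exp (c2 * (t - t0))) by apply exp_pos.
  apply Rlt_0_minus.
  replace (exp (q2 c1 c2 t0 t) - exp_ym t) with
    (- c1 * c2 * (exp (c2 * (t - t0)) - exp (c1 * (t - t0))) ^ 2 * - C /
     (L * - ym_den t)).
  - apply Rdiv_lt_0_compat.
    + apply Rmult_lt_0_compat; [apply Rmult_lt_0_compat; [nra | apply pow_lt] | ]; lra.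
    + apply Rmult_lt_0_compat; lra.
  - unfold exp_ym, ym_den, ym_num in *. rewrite exp_q2, exp_diff_mul in *.
    field. repeat split; lra.
Qed.

Lemma ym_between_peaks (t : R) : t < t0 -> q1 c1 c2 t0 t < ym c1 c2 t0 t xi < q2 c1 c2 t0 t.
Proof.
  intros ht. rewrite ym_eq. split.
  - rewrite <- (ln_exp (q1 c1 c2 t0 t)).
    apply ln_increasing; [apply exp_pos | apply exp_q1_lt_exp_ym, ht].
  - rewrite <- (ln_exp (q2 c1 c2 t0 t)).
    apply ln_increasing; [apply exp_ym_pos | apply exp_ym_lt_exp_q2, ht].
Qed.

Definition ux (t : R) : R :=
  - L * (exp (c1 * (t - t0)) / exp_ym t + exp_ym t / exp (c2 * (t - t0)))
  / (1 - exp (L * (t - t0))).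

Lemma is_derive_u_ym (t : R) : t < t0 ->
  is_derive (fun x => u c1 c2 t0 t x) (ym c1 c2 t0 t xi) (ux t).
Proof.
  intros ht. destruct (ym_between_peaks t ht) as [o1 o2].
  apply is_derive_ext_loc with (f := fun x =>
    p1 c1 c2 t0 t * exp (q1 c1 c2 t0 t - x) + p2 c1 c2 t0 t * exp (x - q2 c1 c2 t0 t)).
  - apply locally_interval with (a := q1 c1 c2 t0 t) (b := q2 c1 c2 t0 t); auto.
    intros x hx1 hx2. simpl in hx1, hx2. unfold u.
    rewrite (Rabs_right (x - q1 c1 c2 t0 t)), (Rabs_left (x - q2 c1 c2 t0 t)) by lra.
    f_equal; f_equal; f_equal; ring.
  - auto_derive; [exact I |].
    assert (hY := exp_ym_pos t).
    assert (hm : exp (c1 * (t - t0)) < exp (c2 * (t - t0))) by (apply exp_increasing; nra).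
    assert (0 < exp (c1 * (t - t0))) by apply exp_pos.
    rewrite !exp_plus, !exp_Ropp, exp_q1, exp_q2, ym_eq, exp_ln by exact hY.
    unfold p1, p2, ux. rewrite !exp_diff_mul.
    field. repeat split; nra.
Qed.

Definition dym (t : R) : R :=
  c1 ^ 2 * c2 ^ 2 * L * exp (c2 * (t - t0)) * (1 - exp (L * (t - t0))) ^ 2
  * exp xi * (1 - E) ^ 2 / (ym_num t * ym_den t).

Lemma is_derive_ym (t : R) : is_derive (fun s => ym c1 c2 t0 t s) xi (dym t).
Proof.
  assert (hY := exp_ym_pos t). assert (hN := ym_num_lt0 t). assert (hD := ym_den_lt0 t).
  (* The first factor equals -c1 c2 e^(c2 (t - t0)) (1 - e^(L (t - t0)))^2. *)
  replace (dym t) with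
    (((c1 * exp (L * (t - t0)) - c2) * (c1 * exp (c2 * (t - t0)) - c2 * exp (c1 * (t - t0)))
       - L ^ 2 * exp (c1 * (t - t0)))
     * ((- L * c1 * exp xi + L * c2 * E * exp xi) * C - D * (L * exp (c2 * t0) * exp xi))
     / (ym_num t * ym_den t)).
  - apply is_derive_ln_affine_ratio;
      [apply is_derive_Cf | apply is_derive_Df | exact (Rlt_not_eq _ _ hD) | exact hY].
  - assert (0 < exp (c2 * (t - t0))) by apply exp_pos.
    rewrite Cf_Df_wronskian. unfold dym. rewrite exp_diff_mul.
    field. split; lra.
Qed.

(* u_x blows up like 1 / (1 - e^(L (t - t0))) as the peaks collide while dym
   vanishes like its inverse square; h_at is their product with this factor cancelled. *)
Definition h_at (t : R) : R :=
  L ^ 2 * (exp (c1 * (t - t0)) / exp_ym t + exp_ym t / exp (c2 * (t - t0))) ^ 2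
  * (c1 ^ 2 * c2 ^ 2 * L * exp (c2 * (t - t0)) * exp xi * (1 - E) ^ 2)
  / (ym_num t * ym_den t).

Lemma ux_sqr_mul_dym (t : R) : t < t0 -> ux t ^ 2 * dym t = h_at t.
Proof.
  intros ht.
  assert (hw : exp (L * (t - t0)) < 1) by (rewrite <- exp_0; apply exp_increasing; nra).
  assert (hN := ym_num_lt0 t). assert (hD := ym_den_lt0 t). assert (hY := exp_ym_pos t).
  assert (0 < exp (c2 * (t - t0))) by apply exp_pos.
  unfold ux, dym, h_at. field. repeat split; lra.
Qed.

Lemma continuity_pt_h_at : continuity_pt h_at t0.
Proof.
  apply continuity_pt_filterlim, (ex_derive_continuous (K := R_AbsRing) (V := R_NormedModule)).
  assert (hN := ym_num_lt0 t0). assert (hD := ym_den_lt0 t0). assert (hY := exp_ym_pos t0).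
  unfold h_at, exp_ym, ym_num, ym_den.
  auto_derive.
  repeat split; try exact I;
    first [ exact (Rlt_not_eq _ _ hD) | exact (Rgt_not_eq _ _ hY)
          | apply Rgt_not_eq, exp_pos
          | apply Rmult_integral_contrapositive; split; apply Rlt_not_eq; assumption ].
Qed.

Lemma h_at_t0 : h_at t0 = hstar c1 c2 t0 xi.
Proof.
  assert (hh := hden_lt0 xi). assert (hDC := Df_add_Cf xi).
  unfold h_at, hstar. rewrite exp_ym_t0. unfold ym_num, ym_den.
  rewrite Rminus_diag, !Rmult_0_r, exp_0.
  replace D with (L * hden c1 c2 t0 xi - L * C) by lra.
  assert (0 < L * - hden c1 c2 t0 xi) by nra.
  field. repeat split; nra.
Qed.

End Characteristic.
End TwoPeakons.

Theorem mainTheorem6 (c1 c2 t0 : R) (hc1 : 0 < c1) (hc2 : c2 < 0) (ht0 : 0 < t0) :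
  ((forall xi, q10 c1 c2 t0 <= xi <= q20 c1 c2 t0 -> hden c1 c2 t0 xi <> 0) ->
   exists pr : Riemann_integrable (hstar c1 c2 t0) (q10 c1 c2 t0) (q20 c1 c2 t0),
     RiemannInt pr = - 4 * c1 * c2)
  /\
  (forall xi, q10 c1 c2 t0 < xi < q20 c1 c2 t0 ->
   exists delta : R, 0 < delta /\
   exists Ux Dy : R -> R,
     (forall t, t0 - delta < t < t0 ->
        derivable_pt_lim (fun x => u c1 c2 t0 t x) (ym c1 c2 t0 t xi) (Ux t) /\
        derivable_pt_lim (fun s => ym c1 c2 t0 t s) xi (Dy t)) /\
     limit1_in (fun t => (Ux t) ^ 2 * Dy t) (fun t => t0 - delta < t < t0)
       (hstar c1 c2 t0 xi) t0).
Proof.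
  split.
  (* [hden] is negative everywhere (hden_lt0). *)
  - intros _. now apply RiemannInt_hstar.
  - intros xi hxi. exists 1. split; [lra |].
    exists (ux c1 c2 t0 xi), (dym c1 c2 t0 xi). split.
    + intros t [_ ht]. split; apply is_derive_Reals.
      * now apply is_derive_u_ym.
      * now apply is_derive_ym.
    + apply limit1_ext with (h_at c1 c2 t0 xi).
      { intros t [_ ht]. symmetry. now apply ux_sqr_mul_dym. }
      rewrite <- h_at_t0 by assumption.
      apply limit1_imp with (D_x no_cond t0).
      { intros t [_ ht]. split; [exact I | lra]. }
      now apply continuity_pt_h_at.
Qed.
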